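(* Let $M,N$ be weights of $\mathbb{R}^m,\mathbb{R}^n$, let $A\in\mathbb{R}^{m\times n}$ with $MA=AN$, and let $K\subseteq\mathbb{R}^n$ be a closed cone with $A^{[\dagger]}\circ A\circ K\subseteq K$. Then $$(A^{[*]}\circ A)^{[\dagger]}\circ K^{[*]}\subseteq K+\mathcal{N}(A\circ I)\iff (A^{[*]}\circ A)^{[\dagger]}\circ K^{[*]}\subseteq K.$$
   Context: A weight is a real symmetric matrix $W$ with $W^2=I$. $\mathbb{R}^m$ and $\mathbb{R}^n$ carry weights $M\in\mathbb{R}^{m\times m}$ and $N\in\mathbb{R}^{n\times n}$, respectively. The indefinite inner product on the space with weight $W$ is $[x,y]=\langle x,Wy\rangle$. Indefinite matrix product: if $B$ has $p$ columns and $C$ has $p$ rows (or is a vector in $\mathbb{R}^p$), $p\in\{m,n\}$, and $W$ is the weight of $\mathbb{R}^p$, then $B\circ C:=BWC$. $I$ denotes an identity matrix of the appropriate size. Indefinite adjoint of $B\in\mathbb{R}^{p\times q}$: $B^{[*]}:=W_qB^TW_p$, where $W_p,W_q$ are the weights of $\mathbb{R}^p,\mathbb{R}^q$. Indefinite Moore–Penrose inverse: for $B\in\mathbb{R}^{p\times q}$, $B^{[\dagger]}$ is the unique $X\in\mathbb{R}^{q\times p}$ such that - $B\circ X\circ B=B$, - $X\circ B\circ X=X$, - $(B\circ X)^{[*]}=B\circ X$, - $(X\circ B)^{[*]}=X\circ B$. It equals $W_qB^\dagger W_p$. Range and null space: for a matrix $B$ with $q$ columns, $\mathcal{R}(B)=\{B\circ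 x:x\in\mathbb{R}^q\}$ and $\mathcal{N}(B)=\{x\in\mathbb{R}^q:B\circ x=0\}$. A cone is a nonempty set closed under addition and under multiplication by nonnegative scalars. For $S$ a subset of $\mathbb{R}^p$ with weight $W$, the dual is $S^{[*]}=\{x\in\mathbb{R}^p:[x,t]\ge0\ \forall t\in S\}$. For a matrix $B$ and a set $S$, $B\circ S=\{B\circ s:s\in S\}$. The sum of sets is the Minkowski sum. *)

From HB Require Import structures.
From Stdlib Require Import Reals ClassicalEpsilon FunctionalExtensionality.
From mathcomp Require Import all_boot all_algebra.

Set Implicit Arguments.
Unset Strict Implicit.
Unset Printing Implicit Defensive.

Local Open Scope R_scope.

Definition Reqb (x y : R) : bool := if Req_EM_T x y then true else false.
Lemma R_eqP : Equality.axiom Reqb.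
Proof. move=> x y; rewrite /Reqb; case: Req_EM_T => h; [exact: ReflectT | exact: ReflectF]. Qed.
HB.instance Definition _ := hasDecEq.Build R R_eqP.

Definition R_find (P : pred R) (_ : nat) : option R :=
  match excluded_middle_informative (exists x, P x) with
  | left h => Some (proj1_sig (constructive_indefinite_description _ h))
  | right _ => None
  end.

Lemma R_find_correct P n x : R_find P n = Some x -> P x.
Proof.
rewrite /R_find; case: excluded_middle_informative => // h [<-].
exact: proj2_sig (constructive_indefinite_description _ h).
Qed.

Lemma R_find_complete (P : pred R) : (exists x, P x) -> exists n, R_find P n.
Proof. by move=> h; exists 0%N; rewrite /R_find; case: excluded_middle_informative. Qed.

Lemma R_find_ext (P Q : pred R) : P =1 Q -> R_find P =1 R_find Q.
Proof.
by move=> h; have -> : P = Q by apply: functional_extensionality.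
Qed.

HB.instance Definition _ := hasChoice.Build R R_find_correct R_find_complete R_find_ext.

Lemma R_addA : associative Rplus.
Proof. by move=> x y z; rewrite Rplus_assoc. Qed.
Lemma R_addC : commutative Rplus.
Proof. exact: Rplus_comm. Qed.
Lemma R_add0 : left_id R0 Rplus.
Proof. exact: Rplus_0_l. Qed.
Lemma R_addN : left_inverse R0 Ropp Rplus.
Proof. exact: Rplus_opp_l. Qed.
HB.instance Definition _ := GRing.isZmodule.Build R R_addA R_addC R_add0 R_addN.

Lemma R_mulA : associative Rmult.
Proof. by move=> x y z; rewrite Rmult_assoc. Qed.

Lemma R1_neq0 : (R1 != R0 :> R).
Proof. by apply/eqP; exact: R1_neq_R0. Qed.

HB.instance Definition _ := GRing.Zmodule_isComNzRing.Build R
  R_mulA Rmult_comm Rmult_1_l Rmult_plus_distr_r R1_neq0.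

Lemma R_mulVf (x : R) : x != 0%R -> Rinv x * x = 1%R.
Proof. by move=> /eqP h; exact: Rinv_l. Qed.

HB.instance Definition _ := GRing.ComNzRing_isField.Build R R_mulVf Rinv_0.

Local Open Scope ring_scope.

Definition is_weight (p : nat) (W : 'M[R]_p) : Prop :=
  W^T = W /\ W *m W = 1%:M.

(* Indefinite matrix product B o C := B W C, W the weight of R^p
   (p = number of columns of B = number of rows of C). *)
Definition iprod (p q r : nat) (W : 'M[R]_p) (B : 'M[R]_(q, p)) (C : 'M[R]_(p, r))
  : 'M[R]_(q, r) := B *m W *m C.

Definition iadj (p q : nat) (Wp : 'M[R]_p) (Wq : 'M[R]_q) (B : 'M[R]_(p, q))
  : 'M[R]_(q, p) := Wq *m B^T *m Wp.

(* X is the indefinite Moore-Penrose inverse of B in R^{p x q}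
   (it is unique, and equals W_q B^dagger W_p). *)
Definition is_indef_MP (p q : nat) (Wp : 'M[R]_p) (Wq : 'M[R]_q)
  (B : 'M[R]_(p, q)) (X : 'M[R]_(q, p)) : Prop :=
  [/\ iprod Wp (iprod Wq B X) B = B,
      iprod Wq (iprod Wp X B) X = X,
      iadj Wp Wp (iprod Wq B X) = iprod Wq B X &
      iadj Wq Wq (iprod Wp X B) = iprod Wp X B].

Definition vset (p : nat) := 'cV[R]_p -> Prop.

Definition iinner (p : nat) (W : 'M[R]_p) (x y : 'cV[R]_p) : R :=
  (x^T *m W *m y) ord0 ord0.

Definition idual (p : nat) (W : 'M[R]_p) (S : vset p) : vset p :=
  fun x => forall t, S t -> Rle 0%R (iinner W x t).

Definition iimage (p q : nat) (W : 'M[R]_p) (B : 'M[R]_(q, p)) (S : vset p) : vset q :=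
  fun y => exists2 s, S s & y = iprod W B s.

Definition inull (p q : nat) (W : 'M[R]_p) (B : 'M[R]_(q, p)) : vset p :=
  fun x => iprod W B x = 0.

Definition msum (p : nat) (S T : vset p) : vset p :=
  fun z => exists s t, S s /\ T t /\ z = s + t.

Definition vsubset (p : nat) (S T : vset p) : Prop := forall x, S x -> T x.

Definition is_cone (p : nat) (K : vset p) : Prop :=
  [/\ exists x, K x,
      forall x y, K x -> K y -> K (x + y) &
      forall (a : R) x, Rle 0%R a -> K x -> K (a *: x)].

(* Closed in the usual (Euclidean) topology of R^p; expressed with the
   sup-norm, which induces the same topology. *)
Definition is_closed (p : nat) (K : vset p) : Prop :=
  forall x : 'cV[R]_p,
    (forall eps : R, Rlt 0%R eps ->
       exists2 k, K k & forall i : 'I_p, Rlt (Rabs (x i ord0 - k i ord0)) eps) ->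
    K x.

From HB Require Import structures.
From Stdlib Require Import Reals.
From mathcomp Require Import all_boot all_algebra.

(* The projector P := A^[dagger] o A fixes the range of A^[*], and the
   Moore-Penrose identity Y = Y o G o Y together with the self-adjointness of
   Y o G shows that Y = G o (Y^[*] o Y) for the Gram matrix G := A^[*] o A; hence
   P o Y = Y.  Since M A = A N, P also kills N(A o I).  So if Y o x = k + t with
   k in K and t in N(A o I), then Y o x = P o k lies in A^[dagger] o A o K, which
   is contained in K.  The converse inclusion holds because 0 lies in N(A o I). *)

Set Implicit Arguments.
Unset Strict Implicit.
Unset Printing Implicit Defensive.

Import GRing.Theory.
Local Open Scope ring_scope.

Lemma iprodA p q r s (Wp : 'M[R]_p) (Wq : 'M[R]_q)
    (B : 'M[R]_(r, p)) (C : 'M[R]_(p, q)) (D : 'M[R]_(q, s)) :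
  iprod Wq (iprod Wp B C) D = iprod Wp B (iprod Wq C D).
Proof. by rewrite /iprod !mulmxA. Qed.

Lemma iprodDr p q r (W : 'M[R]_p) (B : 'M[R]_(q, p)) (C D : 'M[R]_(p, r)) :
  iprod W B (C + D) = iprod W B C + iprod W B D.
Proof. by rewrite /iprod mulmxDr. Qed.

Lemma iprod0r p q r (W : 'M[R]_p) (B : 'M[R]_(q, p)) :
  iprod W B (0 : 'M[R]_(p, r)) = 0.
Proof. by rewrite /iprod mulmx0. Qed.

Lemma iadj_iprod p q r (Wp : 'M[R]_p) (Wq : 'M[R]_q) (Wr : 'M[R]_r)
    (B : 'M[R]_(p, q)) (C : 'M[R]_(q, r)) :
  is_weight Wq ->
  iadj Wp Wr (iprod Wq B C) = iprod Wq (iadj Wq Wr C) (iadj Wp Wq B).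
Proof.
move=> [WqT WqWq].
by rewrite /iadj /iprod !trmx_mul WqT !mulmxA -(mulmxA _ Wq Wq) WqWq mulmx1.
Qed.

Lemma iadjK p q (Wp : 'M[R]_p) (Wq : 'M[R]_q) (B : 'M[R]_(p, q)) :
  is_weight Wp -> is_weight Wq -> iadj Wq Wp (iadj Wp Wq B) = B.
Proof.
move=> [WpT WpWp] [WqT WqWq].
by rewrite /iadj !trmx_mul trmxK WpT WqT !mulmxA WpWp mul1mx -mulmxA WqWq mulmx1.
Qed.

Section IndefiniteMoorePenrose.

Variables (p q : nat) (Wp : 'M[R]_p) (Wq : 'M[R]_q).
Hypotheses (wWp : is_weight Wp) (wWq : is_weight Wq).
Variables (B : 'M[R]_(p, q)) (X : 'M[R]_(q, p)).
Hypothesis MP_BX : is_indef_MP Wp Wq B X.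

Lemma indef_MP_fixes_adj : iprod Wq (iprod Wp X B) (iadj Wp Wq B) = iadj Wp Wq B.
Proof.
have [BXB _ _ XBadj] := MP_BX.
by rewrite -{1}XBadj -iadj_iprod // -iprodA BXB.
Qed.

Lemma indef_MP_adj_factor :
  X = iprod Wp (iadj Wp Wq B) (iprod Wq (iadj Wq Wp X) X).
Proof.
have [_ XBX _ XBadj] := MP_BX.
by rewrite -iprodA -iadj_iprod // XBadj XBX.
Qed.

End IndefiniteMoorePenrose.

Section Gram.

Variables (m n : nat) (M : 'M[R]_m) (N : 'M[R]_n).
Hypotheses (wM : is_weight M) (wN : is_weight N).
Variable A : 'M[R]_(m, n).

Lemma iadj_gram : iadj N N (iprod M (iadj M N A) A) = iprod M (iadj M N A) A.
Proof. by rewrite iadj_iprod // iadjK. Qed.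

Lemma indef_MP_proj_fixes_gram_MP (Adag : 'M[R]_(n, m)) (Y : 'M[R]_n) :
  is_indef_MP M N A Adag -> is_indef_MP N N (iprod M (iadj M N A) A) Y ->
  iprod N (iprod M Adag A) Y = Y.
Proof.
move=> MPA MPY.
have Yfactor := indef_MP_adj_factor wN MPY.
rewrite iadj_gram in Yfactor.
have PG : iprod N (iprod M Adag A) (iprod M (iadj M N A) A) = iprod M (iadj M N A) A.
  by rewrite -iprodA (indef_MP_fixes_adj wN MPA).
by rewrite {1}Yfactor -iprodA PG -Yfactor.
Qed.

Lemma inull_mx1_sub : M *m A = A *m N ->
  vsubset (inull N (iprod N A (1%:M : 'M[R]_n))) (inull N A).
Proof.
have [_ NN] := wN.
move=> MA x; rewrite /inull /iprod mulmx1 -(mulmxA A N N) NN mulmx1 => Ax0.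
by rewrite -MA -mulmxA Ax0 mulmx0.
Qed.

End Gram.

Theorem lemma3p14 (m n : nat) (M : 'M[R]_m) (N : 'M[R]_n) (A : 'M[R]_(m, n))
  (Adag : 'M[R]_(n, m)) (Y : 'M[R]_n) (K : vset n) :
  is_weight M -> is_weight N ->
  M *m A = A *m N ->
  is_indef_MP M N A Adag ->
  is_indef_MP N N (iprod M (iadj M N A) A) Y ->
  is_cone K -> is_closed K ->
  vsubset (iimage M Adag (iimage N A K)) K ->
  (vsubset (iimage N Y (idual N K))
           (msum K (inull N (iprod N A (1%:M : 'M[R]_n))))
   <-> vsubset (iimage N Y (idual N K)) K).
Proof.
move=> wM wN MA MPA MPY _ _ AdagAK.
split=> H y Hy; last first.
  by exists y, 0; split; [exact: H | split; [exact: iprod0r | rewrite addr0]].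
have [k [t [Kk [Nt ykt]]]] := H _ Hy.
have [s _ yY] := Hy.
have Pt : iprod N (iprod M Adag A) t = 0.
  by rewrite iprodA (inull_mx1_sub wN MA Nt) iprod0r.
rewrite yY -(indef_MP_proj_fixes_gram_MP wM wN MPA MPY) iprodA -yY ykt iprodDr Pt addr0.
apply: AdagAK; exists (iprod N A k); first by exists k.
by rewrite iprodA.
Qed.
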